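(* Let $h>0$, $C\neq 0$ and $n\neq 0$ be real constants, and let $F,Z,U:(0,\infty)\to\mathbb{R}$ be smooth with $Z(\phi)\neq 0$ for all $\phi>0$. Consider the ODE for $\phi=\phi(t)>0$, $t>0$, $$2Z(\phi)\Bigl(\phi''+\frac{h}{t}\phi'\Bigr)=C\,t^{-2}F'(\phi)-Z'(\phi)\,\phi'^2-2U'(\phi).$$ This ODE is invariant under the scaling group $(t,\phi)\mapsto(\lambda t,\lambda^n\phi)$, $\lambda>0$ (equivalently, admits the Lie point symmetry $t\partial_t+n\phi\partial_\phi$), if and only if there are constants $Z_0\neq 0$, $m$, $F_1$, $U_1$ such that for all $\phi>0$ $$Z(\phi)=Z_0\phi^{-m},\qquad F'(\phi)=F_1\phi^{1-m},\qquad U'(\phi)=U_1\phi^{\frac{n-2}{n}-m}.$$ Consequently, in the invariant case: if $m\neq 2$ then $F(\phi)=C_1+F_0\phi^{2-m}$ for constants $C_1,F_0$; and if $mn-2n+2\neq 0$ then $U(\phi)=C_2+U_0\phi^{-\frac{mn-2n+2}{n}}$ for constants $C_2,U_0$. For the invariant power-law $\phi=\phi_0 t^n$ one has $Z(\phi)=Z_0\phi_0^{-m}t^{-nm}$.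
   Context: This ODE is the scalar-field equation $2Z\square\phi=F'(\phi)R-Z'(\phi)\phi_{,\alpha}\phi^{,\alpha}-2U'(\phi)$ of the generalized scalar-tensor theory with action $\frac{1}{8\pi}\int\sqrt{-g}\{\frac12[F(\phi)R-Z(\phi)\phi_{,\alpha}\phi^{,\alpha}-2U(\phi)]+\mathcal{L}_M\}$, for a homogeneous field $\phi(t)$ on a self-similar spatially homogeneous background with $H=h/t$ and scalar curvature $R=Ct^{-2}$. An ODE $\phi''=\Phi(t,\phi,\phi')$ is called invariant under the scaling group $(t,\phi)\mapsto(\lambda t,\lambda^n\phi)$ if $\Phi(\lambda t,\lambda^n\phi,\lambda^{n-1}p)=\lambda^{n-2}\Phi(t,\phi,p)$ for all $\lambda>0$, $t>0$, $\phi>0$, $p\in\mathbb{R}$. The time variable may be shifted, $t\to t+t_0$. *)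

From Stdlib Require Import Reals.
Open Scope R_scope.

Definition smooth_pos (f : R -> R) : Prop :=
  exists D : nat -> R -> R,
    (forall x, 0 < x -> D O x = f x) /\
    (forall k x, 0 < x -> derivable_pt_lim (D k) x (D (S k) x)).

Definition deriv_pos (F dF : R -> R) : Prop :=
  forall x, 0 < x -> derivable_pt_lim F x (dF x).

(* Right-hand side Phi(t, phi, p) of the ODE phi'' = Phi(t, phi, phi'),
   obtained from  2 Z (phi'' + (h/t) phi') = C t^-2 F'(phi) - Z'(phi) phi'^2 - 2 U'(phi). *)
Definition Phi (h C : R) (dF Z dZ dU : R -> R) (t ph p : R) : R :=
  - (h / t) * p + (C * / (t ^ 2) * dF ph - dZ ph * p ^ 2 - 2 * dU ph) / (2 * Z ph).

Definition scale_invariant (n : R) (Phi : R -> R -> R -> R) : Prop :=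
  forall lam t ph p, 0 < lam -> 0 < t -> 0 < ph ->
    Phi (lam * t) (Rpower lam n * ph) (Rpower lam (n - 1) * p)
    = Rpower lam (n - 2) * Phi t ph p.

From Stdlib Require Import Reals Lra.
Open Scope R_scope.

(* Dividing the field equation by 2 Z(φ), its right-hand side reads
     Phi(t, φ, p) = -(h/t) p + C t^-2 A(φ) - p^2 B(φ) - D(φ)
   with the coefficient functions A = F'/(2Z), B = Z'/(2Z) and D = U'/Z.
   Under (t, φ, p) |-> (λt, μφ, λ^(n-1) p) with μ = λ^n the friction term
   -(h/t) p is exactly covariant, and the defect of invariance is a
   combination of 1/t^2, p^2 and 1 whose coefficients are the defects of
   homogeneity of A, B, D of degrees 1, -1 and (n-2)/n.  Since C <> 0 the
   ODE is therefore scale invariant iff A, B, D are homogeneous of these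
   degrees, i.e. iff they are the power functions a φ, b/φ, d φ^((n-2)/n).
   The condition Z'/Z = 2b/φ is a linear ODE whose solutions on (0,+oo) are
   Z(1) φ^(2b); with m = -2b this turns the homogeneity of A, B, D into the
   stated power laws for Z, F', U', and conversely.  The consequences follow
   by integrating powers (a function with zero derivative on (0,+oo) is
   constant) and by evaluating the power law of Z along φ0 t^n. *)

Lemma Rpower_pos x y : 0 < Rpower x y.
Proof. unfold Rpower; apply exp_pos. Qed.

Lemma Rpower_base_1 y : Rpower 1 y = 1.
Proof. unfold Rpower; rewrite ln_1, Rmult_0_r; apply exp_0. Qed.

Lemma Rpower_succ x y : 0 < x -> Rpower x (y + 1) = Rpower x y * x.
Proof. intros Hx; rewrite Rpower_plus, Rpower_1 by exact Hx; reflexivity. Qed.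

Lemma Rpower_inv_1 x : 0 < x -> Rpower x (-1) = / x.
Proof.
  intros Hx; replace (-1) with (- (1)) by ring.
  rewrite Rpower_Ropp, Rpower_1 by exact Hx; reflexivity.
Qed.

Lemma Rpower_root x n : 0 < x -> n <> 0 -> Rpower (Rpower x (/ n)) n = x.
Proof.
  intros Hx Hn; rewrite Rpower_mult, Rinv_l, Rpower_1 by assumption; reflexivity.
Qed.

Lemma derivable_pt_lim_ext_pos f g x l : 0 < x ->
  (forall y, 0 < y -> f y = g y) ->
  derivable_pt_lim f x l -> derivable_pt_lim g x l.
Proof.
  intros Hx Efg Df eps Heps.
  destruct (Df eps Heps) as [d Hd].
  assert (Hdelta : 0 < Rmin d (x / 2)) by (apply Rmin_pos; [apply cond_pos | lra]).
  exists (mkposreal _ Hdelta); simpl; intros k Hk0 Hk.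
  pose proof (Rmin_l d (x / 2)); pose proof (Rmin_r d (x / 2)).
  apply Rabs_def2 in Hk as [Hk1 Hk2].
  rewrite <- !Efg by lra.
  apply Hd; [exact Hk0 | apply Rabs_def1; lra].
Qed.

Lemma zero_derivative_constant f :
  (forall x, 0 < x -> derivable_pt_lim f x 0) ->
  forall x, 0 < x -> f x = f 1.
Proof.
  intros Df x Hx.
  pose proof (Rmin_l x 1); pose proof (Rmin_r x 1).
  pose proof (Rmax_l x 1); pose proof (Rmax_r x 1).
  set (a := Rmin x 1) in *; set (b := Rmax x 1) in *.
  assert (Ha : 0 < a) by (apply Rmin_pos; lra).
  assert (pr : forall y, a < y < b -> derivable_pt f y)
    by (intros y Hy; exists 0; apply Df; lra).
  assert (Hcont : forall y, a <= y <= b -> continuity_pt f y)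
    by (intros y Hy; apply derivable_continuous_pt; exists 0; apply Df; lra).
  assert (Hzero : forall y (P : a < y < b), derive_pt f y (pr y P) = 0)
    by (intros y P; apply derive_pt_eq_0, Df; lra).
  pose proof (null_derivative_loc f a b pr Hcont Hzero) as Hconst.
  rewrite (Hconst x), (Hconst 1) by lra; reflexivity.
Qed.

Lemma antiderivative_power G dG K e : e <> 0 -> deriv_pos G dG ->
  (forall y, 0 < y -> dG y = K * Rpower y (e - 1)) ->
  exists C0 G0, forall y, 0 < y -> G y = C0 + G0 * Rpower y e.
Proof.
  intros He DG HdG.
  set (g := fun y => G y - K / e * Rpower y e).
  assert (Hg : forall y, 0 < y -> g y = g 1).
  { apply zero_derivative_constant; intros y Hy.
    replace 0 with (dG y - K / e * (e * Rpower y (e - 1)))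
      by (rewrite HdG by exact Hy; field; exact He).
    apply derivable_pt_lim_minus; [apply DG, Hy |].
    apply (derivable_pt_lim_scal (fun y => Rpower y e)).
    apply derivable_pt_lim_power, Hy. }
  exists (g 1), (K / e); intros y Hy.
  rewrite <- (Hg y Hy); unfold g; ring.
Qed.

Lemma power_law_of_log_derivative Z dZ k : deriv_pos Z dZ ->
  (forall y, 0 < y -> dZ y = k * Z y / y) ->
  forall y, 0 < y -> Z y = Z 1 * Rpower y k.
Proof.
  intros DZ HdZ.
  assert (Hconst : forall y, 0 < y ->
            Z y * Rpower y (- k) = Z 1 * Rpower 1 (- k)).
  { apply (zero_derivative_constant (fun y => Z y * Rpower y (- k))).
    intros y Hy.
    replace 0 with (dZ y * Rpower y (- k) + Z y * (- k * Rpower y (- k - 1))).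
    - apply (derivable_pt_lim_mult Z (fun y => Rpower y (- k))).
      + apply DZ, Hy.
      + apply derivable_pt_lim_power, Hy.
    - rewrite HdZ by exact Hy.
      replace (- k) with (- k - 1 + 1) at 1 by ring.
      rewrite Rpower_succ by exact Hy; field; lra. }
  intros y Hy.
  specialize (Hconst y Hy); rewrite Rpower_base_1, Rmult_1_r, Rpower_Ropp in Hconst.
  pose proof (Rpower_pos y k).
  replace (Z y) with (Z y * / Rpower y k * Rpower y k) by (field; lra).
  rewrite Hconst; reflexivity.
Qed.

Lemma log_derivative_of_power_law Z dZ Z0 k : deriv_pos Z dZ ->
  (forall y, 0 < y -> Z y = Z0 * Rpower y k) ->
  forall y, 0 < y -> dZ y = k * Z y / y.
Proof.
  intros DZ HZ y Hy.
  assert (Dpow : derivable_pt_lim (fun y => Z0 * Rpower y k) y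
                   (Z0 * (k * Rpower y (k - 1)))).
  { apply (derivable_pt_lim_scal (fun y => Rpower y k)).
    apply derivable_pt_lim_power, Hy. }
  assert (DZpow : derivable_pt_lim (fun y => Z0 * Rpower y k) y (dZ y))
    by (apply (derivable_pt_lim_ext_pos Z); [exact Hy | exact HZ | apply DZ, Hy]).
  rewrite (uniqueness_limite _ _ _ _ DZpow Dpow), HZ by exact Hy.
  replace (Rpower y k) with (Rpower y (k - 1 + 1)) by (f_equal; ring).
  rewrite Rpower_succ by exact Hy; field; lra.
Qed.

Lemma combination_vanishes C lam q a b d : C <> 0 -> 0 < lam -> 0 < q ->
  (forall t p, 0 < t -> C / (lam * t) ^ 2 * a - (q * p) ^ 2 * b - d = 0) ->
  a = 0 /\ b = 0 /\ d = 0.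
Proof.
  intros HC Hlam Hq Hcomb.
  pose proof (Hcomb 1 0 ltac:(lra)) as H10.
  pose proof (Hcomb 2 0 ltac:(lra)) as H20.
  pose proof (Hcomb 1 1 ltac:(lra)) as H11.
  assert (Ha : a = 0).
  { assert (Hscaled : 3 / 4 * (C / lam ^ 2) * a = 0).
    { replace (3 / 4 * (C / lam ^ 2) * a) with
        ((C / (lam * 1) ^ 2 * a - (q * 0) ^ 2 * b - d)
         - (C / (lam * 2) ^ 2 * a - (q * 0) ^ 2 * b - d)) by (field; lra).
      rewrite H10, H20; ring. }
    assert (Hcoef : 3 / 4 * (C / lam ^ 2) <> 0).
    { apply Rmult_integral_contrapositive; split; [lra |].
      unfold Rdiv; apply Rmult_integral_contrapositive; split;
        [exact HC | apply Rinv_neq_0_compat, pow_nonzero; lra]. }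
    apply Rmult_integral in Hscaled as [Hzero | Hzero]; [contradiction | exact Hzero]. }
  assert (Hd : d = 0) by (rewrite Ha in H10; lra).
  split; [exact Ha | split; [| exact Hd]].
  rewrite Ha, Hd in H11.
  assert (Hb : (q * 1) ^ 2 * b = 0) by lra.
  apply Rmult_integral in Hb as [Hq2 | Hzero]; [| exact Hzero].
  exfalso; revert Hq2; apply pow_nonzero; lra.
Qed.

Definition homogeneous (k : R) (g : R -> R) : Prop :=
  forall mu x, 0 < mu -> 0 < x -> g (mu * x) = Rpower mu k * g x.

Definition homogeneity_defect (k : R) (g : R -> R) (mu x : R) : R :=
  g (mu * x) - Rpower mu k * g x.

Lemma homogeneous_power_law k g : homogeneous k g ->
  forall x, 0 < x -> g x = g 1 * Rpower x k.
Proof.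
  intros Hg x Hx.
  rewrite <- (Rmult_1_r x) at 1; rewrite Hg by lra; ring.
Qed.

Lemma power_law_homogeneous k a g :
  (forall x, 0 < x -> g x = a * Rpower x k) -> homogeneous k g.
Proof.
  intros Hg mu x Hmu Hx.
  rewrite !Hg by (try apply Rmult_lt_0_compat; assumption).
  rewrite <- Rpower_mult_distr by assumption; ring.
Qed.

Section ScalarFieldEquation.

Variables (h C n : R) (dF Z dZ dU : R -> R).
Hypothesis Z_nonzero : forall x, 0 < x -> Z x <> 0.

(* Coefficients of t^-2, of -p^2 and of -1 in Phi. *)
Definition curvature_coef (x : R) : R := dF x / (2 * Z x).
Definition kinetic_coef (x : R) : R := dZ x / (2 * Z x).
Definition potential_coef (x : R) : R := dU x / Z x.

Hypothesis n_nonzero : n <> 0.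

Lemma Phi_scaling_defect lam t x p : 0 < lam -> 0 < t -> 0 < x ->
  Phi h C dF Z dZ dU (lam * t) (Rpower lam n * x) (Rpower lam (n - 1) * p)
  - Rpower lam (n - 2) * Phi h C dF Z dZ dU t x p
  = C / (lam * t) ^ 2 * homogeneity_defect 1 curvature_coef (Rpower lam n) x
    - (Rpower lam (n - 1) * p) ^ 2
      * homogeneity_defect (-1) kinetic_coef (Rpower lam n) x
    - homogeneity_defect ((n - 2) / n) potential_coef (Rpower lam n) x.
Proof.
  intros Hlam Ht Hx.
  pose proof (Rpower_pos lam n) as Hmu.
  assert (Zmux : Z (Rpower lam n * x) <> 0)
    by (apply Z_nonzero, Rmult_lt_0_compat; assumption).
  pose proof (Z_nonzero x Hx) as Zx.
  unfold homogeneity_defect, curvature_coef, kinetic_coef, potential_coef, Phi.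
  rewrite Rpower_1, Rpower_inv_1, Rpower_mult by exact Hmu.
  replace (n * ((n - 2) / n)) with (n - 2) by (field; exact n_nonzero).
  (* Only λ^(n-2) and λ itself remain: express λ^(n-1) and λ^n through them. *)
  assert (Epred : Rpower lam (n - 1) = Rpower lam (n - 2) * lam)
    by (rewrite <- Rpower_succ by exact Hlam; f_equal; ring).
  assert (Emu : Rpower lam n = Rpower lam (n - 2) * lam * lam)
    by (rewrite <- Epred, <- Rpower_succ by exact Hlam; f_equal; ring).
  set (y := Rpower lam n * x) in *.
  generalize (dF y) (dZ y) (dU y) (Z y) Zmux; intros dFy dZy dUy Zy Zy_nz.
  rewrite Epred, Emu.
  pose proof (Rpower_pos lam (n - 2)).
  field; repeat split; lra.
Qed.

Hypothesis C_nonzero : C <> 0.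

Lemma scale_invariant_iff_homogeneous_coefs :
  scale_invariant n (Phi h C dF Z dZ dU) <->
  homogeneous 1 curvature_coef /\ homogeneous (-1) kinetic_coef /\
  homogeneous ((n - 2) / n) potential_coef.
Proof.
  split.
  - intros Hinv.
    assert (Hdefects : forall mu x, 0 < mu -> 0 < x ->
      homogeneity_defect 1 curvature_coef mu x = 0 /\
      homogeneity_defect (-1) kinetic_coef mu x = 0 /\
      homogeneity_defect ((n - 2) / n) potential_coef mu x = 0).
    { intros mu x Hmu Hx.
      (* Every scale μ is λ^n for λ = μ^(1/n). *)
      rewrite <- (Rpower_root mu n) by assumption.
      set (lam := Rpower mu (/ n)).
      apply (combination_vanishes C lam (Rpower lam (n - 1)));
        try apply Rpower_pos; [exact C_nonzero |].
      intros t p Ht; rewrite <- Phi_scaling_defect by (try apply Rpower_pos; assumption).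
      rewrite Hinv by (try apply Rpower_pos; assumption); ring. }
    repeat split; intros mu x Hmu Hx; apply Rminus_diag_uniq;
      apply (Hdefects mu x Hmu Hx).
  - intros [HA [HB HD]] lam t x p Hlam Ht Hx.
    apply Rminus_diag_uniq; rewrite Phi_scaling_defect by assumption.
    unfold homogeneity_defect.
    rewrite HA, HB, HD by (try apply Rpower_pos; assumption); ring.
Qed.

Hypothesis Z_deriv : deriv_pos Z dZ.

Lemma power_laws_of_homogeneous_coefs :
  homogeneous 1 curvature_coef -> homogeneous (-1) kinetic_coef ->
  homogeneous ((n - 2) / n) potential_coef ->
  exists Z0 m F1 U1, Z0 <> 0 /\
    forall x, 0 < x ->
      Z x = Z0 * Rpower x (- m) /\
      dF x = F1 * Rpower x (1 - m) /\
      dU x = U1 * Rpower x ((n - 2) / n - m).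
Proof.
  intros HA HB HD.
  set (k := 2 * kinetic_coef 1).
  assert (HZ : forall x, 0 < x -> Z x = Z 1 * Rpower x k).
  { apply (power_law_of_log_derivative Z dZ); [exact Z_deriv |].
    intros x Hx; pose proof (homogeneous_power_law _ _ HB x Hx) as Ekin.
    unfold kinetic_coef at 1 in Ekin; rewrite Rpower_inv_1 in Ekin by exact Hx.
    pose proof (Z_nonzero x Hx).
    unfold k; replace (dZ x) with (dZ x / (2 * Z x) * (2 * Z x)) by (field; auto).
    rewrite Ekin; field; lra. }
  exists (Z 1), (- k), (2 * Z 1 * curvature_coef 1), (Z 1 * potential_coef 1).
  split; [apply Z_nonzero; lra |].
  intros x Hx; rewrite Ropp_involutive; pose proof (Z_nonzero x Hx).
  split; [| split].
  - apply HZ, Hx.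
  - replace (dF x) with (2 * Z x * curvature_coef x)
      by (unfold curvature_coef; field; auto).
    rewrite (homogeneous_power_law _ _ HA x Hx), HZ by exact Hx.
    replace (1 - - k) with (k + 1) by ring.
    rewrite Rpower_succ, Rpower_1 by exact Hx; ring.
  - replace (dU x) with (Z x * potential_coef x)
      by (unfold potential_coef; field; auto).
    rewrite (homogeneous_power_law _ _ HD x Hx), HZ by exact Hx.
    replace ((n - 2) / n - - k) with (k + (n - 2) / n) by ring.
    rewrite Rpower_plus; ring.
Qed.

Lemma homogeneous_coefs_of_power_laws Z0 m F1 U1 : Z0 <> 0 ->
  (forall x, 0 < x ->
     Z x = Z0 * Rpower x (- m) /\
     dF x = F1 * Rpower x (1 - m) /\
     dU x = U1 * Rpower x ((n - 2) / n - m)) ->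
  homogeneous 1 curvature_coef /\ homogeneous (-1) kinetic_coef /\
  homogeneous ((n - 2) / n) potential_coef.
Proof.
  intros HZ0 Hlaws.
  assert (HZ : forall x, 0 < x -> Z x = Z0 * Rpower x (- m))
    by (intros x Hx; apply Hlaws, Hx).
  pose proof (log_derivative_of_power_law Z dZ Z0 (- m) Z_deriv HZ) as HdZ.
  split; [| split].
  - apply (power_law_homogeneous 1 (F1 / (2 * Z0))); intros x Hx.
    destruct (Hlaws x Hx) as [EZ [EdF _]]; pose proof (Rpower_pos x (- m)).
    unfold curvature_coef; rewrite EZ, EdF, Rpower_1 by exact Hx.
    replace (1 - m) with (- m + 1) by ring.
    rewrite Rpower_succ by exact Hx; field; split; lra.
  - apply (power_law_homogeneous (-1) (- m / 2)); intros x Hx.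
    pose proof (Z_nonzero x Hx).
    unfold kinetic_coef; rewrite HdZ, Rpower_inv_1 by exact Hx.
    field; split; [lra | auto].
  - apply (power_law_homogeneous ((n - 2) / n) (U1 / Z0)); intros x Hx.
    destruct (Hlaws x Hx) as [EZ [_ EdU]]; pose proof (Rpower_pos x (- m)).
    unfold potential_coef; rewrite EZ, EdU.
    replace ((n - 2) / n - m) with ((n - 2) / n + - m) by ring.
    rewrite Rpower_plus; field; split; lra.
Qed.

End ScalarFieldEquation.

Lemma power_law_along_power Z Z0 m n :
  (forall x, 0 < x -> Z x = Z0 * Rpower x (- m)) ->
  forall ph0 t, 0 < ph0 -> 0 < t ->
    Z (ph0 * Rpower t n) = Z0 * Rpower ph0 (- m) * Rpower t (- (n * m)).
Proof.
  intros HZ ph0 t Hph0 Ht; pose proof (Rpower_pos t n).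
  rewrite HZ by (apply Rmult_lt_0_compat; assumption).
  rewrite <- Rpower_mult_distr, Rpower_mult by assumption.
  replace (n * - m) with (- (n * m)) by ring; ring.
Qed.

Theorem mainTheorem2 (h C n : R) (F Z U dF dZ dU : R -> R) :
  0 < h -> C <> 0 -> n <> 0 ->
  smooth_pos F -> smooth_pos Z -> smooth_pos U ->
  deriv_pos F dF -> deriv_pos Z dZ -> deriv_pos U dU ->
  (forall ph, 0 < ph -> Z ph <> 0) ->
  (scale_invariant n (Phi h C dF Z dZ dU) <->
   exists Z0 m F1 U1, Z0 <> 0 /\
     forall ph, 0 < ph ->
       Z ph = Z0 * Rpower ph (- m) /\
       dF ph = F1 * Rpower ph (1 - m) /\
       dU ph = U1 * Rpower ph ((n - 2) / n - m))
  /\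
  (forall Z0 m F1 U1, Z0 <> 0 ->
     (forall ph, 0 < ph ->
       Z ph = Z0 * Rpower ph (- m) /\
       dF ph = F1 * Rpower ph (1 - m) /\
       dU ph = U1 * Rpower ph ((n - 2) / n - m)) ->
     (m <> 2 -> exists C1 F0, forall ph, 0 < ph ->
        F ph = C1 + F0 * Rpower ph (2 - m)) /\
     (m * n - 2 * n + 2 <> 0 -> exists C2 U0, forall ph, 0 < ph ->
        U ph = C2 + U0 * Rpower ph (- ((m * n - 2 * n + 2) / n))) /\
     (forall ph0 t, 0 < ph0 -> 0 < t ->
        Z (ph0 * Rpower t n) = Z0 * Rpower ph0 (- m) * Rpower t (- (n * m)))).
Proof.
  intros _ HC Hn _ _ _ DF DZ DU HZ.
  split.
  { rewrite scale_invariant_iff_homogeneous_coefs by assumption.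
    split.
    - intros [HA [HB HD]].
      apply (power_laws_of_homogeneous_coefs n dF Z dZ dU); assumption.
    - intros (Z0 & m & F1 & U1 & HZ0 & Hlaws).
      apply (homogeneous_coefs_of_power_laws n dF Z dZ dU HZ DZ Z0 m F1 U1);
        assumption. }
  intros Z0 m F1 U1 HZ0 Hlaws; split; [| split].
  - intros Hm; apply (antiderivative_power F dF F1); [lra | exact DF |].
    intros y Hy; replace (2 - m - 1) with (1 - m) by ring; apply Hlaws, Hy.
  - intros Hm; apply (antiderivative_power U dU U1); [| exact DU |].
    + intros E; apply Hm.
      replace (m * n - 2 * n + 2) with (- (- ((m * n - 2 * n + 2) / n)) * n)
        by (field; exact Hn).
      rewrite E; ring.
    + intros y Hy.
      replace (- ((m * n - 2 * n + 2) / n) - 1) with ((n - 2) / n - m)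
        by (field; exact Hn).
      apply Hlaws, Hy.
  - apply power_law_along_power; intros x Hx; apply Hlaws, Hx.
Qed.
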